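(* Assume $\langle f\rangle_X=0$ and that $\psi$ satisfies (A1) and (A2), let $u^H$ be the solution of the HQC problem and $u^{H,c}$ its reconstruction. Then for every $k$ and every $X_i\in S_k$, \[ u^{H,c}(X_i)=u^H(X_i)+\epsilon\,\chi(X_{i_k^{\rm coll}},X_i/\epsilon)\,Du^H(X_i). \]
   Context: Let $\epsilon>0$, $N,p$ positive integers, $N\epsilon=1$; $X_i=\epsilon i$, $Y_j=j$. $U^N_{\rm per}(\epsilon\mathbb Z)$: functions $u:\epsilon\mathbb Z\to\mathbb R$ with $u(X_{i+N})=u(X_i)$; $U^N_\#(\epsilon\mathbb Z)$: those with $\langle u\rangle_X:=\frac1N\sum_{i=1}^Nu(X_i)=0$. $\langle u,v\rangle_X=\frac1N\sum_{i=1}^Nu(X_i)v(X_i)$, $Du(X_i)=(u(X_{i+1})-u(X_i))/\epsilon$. $U^p_\#(\epsilon\mathbb Z)$: $p$-periodic functions on $\epsilon\mathbb Z$ with $\sum_{i=1}^pw(X_i)=0$. Two-scale functions $g:\epsilon\mathbb Z\times\mathbb Z\to\mathbb R$ satisfy $g(X_{i+N},Y_j)=g(X_i,Y_j)=g(X_i,Y_{j+p})$; $D_Xg(X_i,Y_j)=(g(X_{i+1},Y_j)-g(X_i,Y_j))/\epsilon$, $D_Yg(X_i,Y_j)=g(X_i,Y_{j+1})-g(X_i,Y_j)$, $\|g\|_{L^\infty(N,p)}=\max_{1\le i\le N,1\le j\le p}|g|$. $\psi$ is a two-scale function with (A1) $0<c_\psi\le\psi\le C_\psi$ and (A2) $\|D_X\psi\|_{L^\infty(N,p)}\le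 C'_\psi$. The cell solution $\chi$ is the two-scale function with $\frac1p\sum_{j=1}^p\chi(X_i,Y_j)=0$ and $-D_Y(\psi D_Y\chi)=D_Y\psi$ everywhere. $f\in U^N_{\rm per}(\epsilon\mathbb Z)$. HQC method: indices $1=i_1<\dots<i_K\le N$, $i_{K+1}=N+1$, $S_k=\{X_i:i_k\le i<i_{k+1}\}$, $H_k=\epsilon(i_{k+1}-i_k)$. $U^H_{\rm per}$: $v\in U^N_{\rm per}(\epsilon\mathbb Z)$ affine on each $\{X_i:i_k\le i\le i_{k+1}\}$; $U^H_\#=U^H_{\rm per}\cap U^N_\#(\epsilon\mathbb Z)$. Sampling domains $S_k^{\rm rep}=\{X_i:i_k^{\rm rep}\le i<i_k^{\rm rep}+p\}\subset S_k$, collocation indices with $X_{i_k^{\rm coll}}\in S_k^{\rm rep}$, $\psi^\epsilon_{{\rm coll},k}(X_i)=\psi(X_{i_k^{\rm coll}},X_i/\epsilon)$, $\langle a,b\rangle_{S_k^{\rm rep}}=\frac1p\sum_{X_i\in S_k^{\rm rep}}a(X_i)b(X_i)$. For $v^H\in U^H_{\rm per}$ let $\ell_k$ be the affine function on $\epsilon\mathbb Z$ equal to $v^H$ on $S_k$; $\mathcal R_k(v^H)=\ell_k+w_k$ with $w_k\in U^p_\#(\epsilon\mathbb Z)$ such that $\langle\psi^\epsilon_{{\rm coll},k}D(\ell_k+w_k),Ds\rangle_{S_k^{\rm rep}}=0$ for all $s\in U^p_\#(\epsilon\mathbb Z)$. HQC problem: $u^H\in U^H_\#$ with $\sum_{k=1}^KH_k\langle\psi^\epsilon_{{\rm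 coll},k}D\mathcal R_k(u^H),D\mathcal R_k(v^H)\rangle_{S_k^{\rm rep}}=\langle f,v^H\rangle_X$ for all $v^H\in U^H_\#$. The reconstruction is $u^{H,c}(X_i)=u^H(X_i)+w_k(X_i)$ for $X_i\in S_k$, with $w_k=\mathcal R_k(u^H)-\ell_k$ computed for $u^H$. *)

(* Indices: a function u on eps*Z is represented by
   u : int -> R with u i = u(X_i); a two-scale function g by
   g : int -> int -> R with g i j = g(X_i, Y_j). Since Y_j = j and
   X_i / eps = i, psi(X_a, X_i/eps) is  psi a i. *)
From mathcomp Require Import all_boot all_order all_algebra.
Set Implicit Arguments. Unset Strict Implicit. Unset Printing Implicit Defensive.
Import Order.TTheory GRing.Theory Num.Theory.
Local Open Scope ring_scope.

Definition eps {R : realFieldType} (N : nat) : R := (N%:R)^-1.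

Definition Dd {R : realFieldType} (N : nat) (u : int -> R) (i : int) : R :=
  (u (i + 1) - u i) / eps N.

Definition periodic {R : realFieldType} (n : nat) (u : int -> R) : Prop :=
  forall i : int, u (i + n%:Z) = u i.

Definition meanX {R : realFieldType} (N : nat) (u : int -> R) : R :=
  (N%:R)^-1 * \sum_(m < N) u (m.+1)%:Z.

Definition innerX {R : realFieldType} (N : nat) (u v : int -> R) : R :=
  (N%:R)^-1 * \sum_(m < N) u (m.+1)%:Z * v (m.+1)%:Z.

Definition UNper {R : realFieldType} (N : nat) (u : int -> R) : Prop := periodic N u.
Definition UNsharp {R : realFieldType} (N : nat) (u : int -> R) : Prop :=
  periodic N u /\ meanX N u = 0.

Definition Upsharp {R : realFieldType} (p : nat) (w : int -> R) : Prop :=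
  periodic p w /\ \sum_(m < p) w (m.+1)%:Z = 0.

Definition twoscale {R : realFieldType} (N p : nat) (g : int -> int -> R) : Prop :=
  forall i j : int, g (i + N%:Z) j = g i j /\ g i (j + p%:Z) = g i j.

Definition DX {R : realFieldType} (N : nat) (g : int -> int -> R) (i j : int) : R :=
  (g (i + 1) j - g i j) / eps N.
Definition DY {R : realFieldType} (g : int -> int -> R) (i j : int) : R :=
  g i (j + 1) - g i j.

Definition Linf_le {R : realFieldType} (N p : nat) (g : int -> int -> R) (C : R) : Prop :=
  forall i j : int, (1 <= i <= N%:Z)%R -> (1 <= j <= p%:Z)%R -> `|g i j| <= C.

Definition affine_on {R : realFieldType} (a b : int) (v : int -> R) : Prop :=
  forall i : int, (a <= i <= b)%R ->
    v i = v a + ((i - a)%:~R / (b - a)%:~R) * (v b - v a).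

(* Coarse mesh: 0-based blocks k = 0..K-1 (paper's k = 1..K),
   ik k = i_{k+1} in the paper's numbering, ik K = N+1. *)
Definition mesh (N K : nat) (ik : nat -> int) : Prop :=
  (0 < K)%N /\ ik 0%N = 1 /\ (forall k, (k < K)%N -> (ik k < ik k.+1)%R) /\ ik K = N%:Z + 1.

Definition inS (ik : nat -> int) (k : nat) (i : int) : bool :=
  (ik k <= i)%R && (i < ik k.+1)%R.

Definition Hk {R : realFieldType} (N : nat) (ik : nat -> int) (k : nat) : R :=
  eps N * (ik k.+1 - ik k)%:~R.

Definition UHper {R : realFieldType} (N K : nat) (ik : nat -> int) (v : int -> R) : Prop :=
  UNper N v /\ forall k, (k < K)%N -> affine_on (ik k) (ik k.+1) v.
Definition UHsharp {R : realFieldType} (N K : nat) (ik : nat -> int) (v : int -> R) : Prop :=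
  UHper N K ik v /\ meanX N v = 0.

Definition ellk {R : realFieldType} (ik : nat -> int) (k : nat) (v : int -> R) : int -> R :=
  fun i => v (ik k) + ((i - ik k)%:~R / (ik k.+1 - ik k)%:~R) * (v (ik k.+1) - v (ik k)).

(* sampling domains S_k^rep = {X_i : irep k <= i < irep k + p}, collocation index *)
Definition sampling (p K : nat) (ik irep icoll : nat -> int) : Prop :=
  forall k, (k < K)%N ->
    [/\ (ik k <= irep k)%R, (irep k + p%:Z <= ik k.+1)%R,
        (irep k <= icoll k)%R & (icoll k < irep k + p%:Z)%R].

Definition innerRep {R : realFieldType} (p : nat) (irep : nat -> int) (k : nat)
  (a b : int -> R) : R :=
  (p%:R)^-1 * \sum_(m < p) a (irep k + m%:Z) * b (irep k + m%:Z).

Definition psicoll {R : realFieldType} (psi : int -> int -> R) (icoll : nat -> int)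
  (k : nat) : int -> R := fun i => psi (icoll k) i.

(* w is the corrector w_k of R_k(v) = ell_k + w_k *)
Definition is_corrector {R : realFieldType} (N p : nat) (psi : int -> int -> R)
  (ik irep icoll : nat -> int) (k : nat) (v w : int -> R) : Prop :=
  Upsharp p w /\
  forall s : int -> R, Upsharp p s ->
    innerRep p irep k
      (fun i => psicoll psi icoll k i * Dd N (fun x => ellk ik k v x + w x) i)
      (Dd N s) = 0.

(* u^H solves the HQC problem (R_k(.) expressed through its correctors) *)
Definition is_HQC_solution {R : realFieldType} (N p K : nat) (psi : int -> int -> R)
  (ik irep icoll : nat -> int) (f uH : int -> R) : Prop :=
  UHsharp N K ik uH /\
  forall v : int -> R, UHsharp N K ik v ->
  forall wu wv : nat -> int -> R,
    (forall k, (k < K)%N -> is_corrector N p psi ik irep icoll k uH (wu k)) ->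
    (forall k, (k < K)%N -> is_corrector N p psi ik irep icoll k v (wv k)) ->
    \sum_(k < K) Hk N ik k *
       innerRep p irep k
         (fun i => psicoll psi icoll k i * Dd N (fun x => ellk ik k uH x + wu k x) i)
         (Dd N (fun x => ellk ik k v x + wv k x))
    = innerX N f v.

Definition is_cell_solution {R : realFieldType} (N p : nat) (psi chi : int -> int -> R) : Prop :=
  twoscale N p chi /\
  (forall i : int, (p%:R)^-1 * \sum_(m < p) chi i (m.+1)%:Z = 0) /\
  (forall i j : int, - DY (fun a b => psi a b * DY chi a b) i j = DY psi i j).

Definition recon {R : realFieldType} (uH : int -> R) (w : nat -> int -> R) (k : nat) (i : int) : R :=
  uH i + w k i.

(* On S_k the coarse solution u^H is affine, so D u^H is the constant slope g of the
   affine function ell_k.  The cell equation says exactly that the flux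
   psi(X_coll, .) (1 + D_Y chi(X_coll, .)) is constant, so g chi(X_coll, .) makes the
   fine-scale flux of ell_k + g chi constant; a constant flux is orthogonal to the
   derivative of every p-periodic function, hence g chi(X_coll, .) solves the cell
   problem defining the corrector w_k.  That problem has a unique solution in U^p_#:
   the difference d of two solutions satisfies sum psi (Dd)^2 = 0 on the sampling
   domain, so d is constant there, hence constant by periodicity, hence zero by its
   vanishing mean.  Finally eps chi D u^H = eps chi g / eps = g chi. *)
From mathcomp Require Import all_boot all_order all_algebra ring lra.
Set Implicit Arguments. Unset Strict Implicit. Unset Printing Implicit Defensive.
Import Order.TTheory GRing.Theory Num.Theory.
Local Open Scope ring_scope.

Section PeriodicGridFunctions.

Variables (R : realFieldType) (N p : nat).
Hypothesis p_gt0 : (0 < p)%N.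

Lemma periodicMz (d : int -> R) : periodic p d ->
  forall (x q : int), d (x + q * p%:Z) = d x.
Proof.
move=> d_per x q.
have dMn (n : nat) y : d (y + n%:Z * p%:Z) = d y.
  elim: n y => [|n IH] y; first by rewrite mul0r addr0.
  by rewrite -[n.+1]addn1 PoszD mulrDl mul1r addrA d_per IH.
case: q => n; first exact: dMn.
by rewrite NegzE mulNr -[in RHS](subrK (n.+1%:Z * p%:Z) x) dMn.
Qed.

Lemma periodic_step_const (d : int -> R) (r : int) : periodic p d ->
  (forall m, (m < p)%N -> d (r + m%:Z + 1) = d (r + m%:Z)) ->
  forall j, d j = d r.
Proof.
move=> d_per d_step.
have d_window m : (m <= p)%N -> d (r + m%:Z) = d r.
  elim: m => [|m IH] le_mp; first by rewrite addr0.
  by rewrite -[m.+1]addn1 PoszD addrA d_step // IH // ltnW.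
move=> j; have pz : p%:Z != 0 by rewrite eqz_nat -lt0n.
have -> : j = r + ((j - r) %% p%:Z)%Z + ((j - r) %/ p%:Z)%Z * p%:Z.
  by rewrite -addrA [X in r + X]addrC -divz_eq addrC subrK.
rewrite periodicMz // -(gez0_abs (modz_ge0 (j - r) pz)) d_window //.
by apply: ltnW; rewrite -ltz_nat gez0_abs ?modz_ge0 // ltz_pmod // ltz_nat.
Qed.

Lemma Upsharp_step_eq0 (d : int -> R) (r : int) : Upsharp p d ->
  (forall m, (m < p)%N -> d (r + m%:Z + 1) = d (r + m%:Z)) ->
  forall j, d j = 0.
Proof.
move=> [d_per d_sum] d_step.
have d_const := periodic_step_const d_per d_step.
have : d r *+ p = 0.
  rewrite -[RHS]d_sum -[p in _ *+ p]card_ord -sumr_const.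
  by apply: eq_bigr => m _; rewrite d_const.
by move/eqP; rewrite mulrn_eq0 eqn0Ngt p_gt0 /= => /eqP d_r j; rewrite d_const.
Qed.

Lemma Upsharp_sub (u v : int -> R) :
  Upsharp p u -> Upsharp p v -> Upsharp p (fun j => u j - v j).
Proof.
move=> [u_per u_sum] [v_per v_sum]; split; first by move=> j; rewrite u_per v_per.
by rewrite sumrB u_sum v_sum subrr.
Qed.

Lemma Upsharp_scale (c : R) (u : int -> R) :
  Upsharp p u -> Upsharp p (fun j => c * u j).
Proof.
move=> [u_per u_sum]; split; first by move=> j; rewrite u_per.
by rewrite -mulr_sumr u_sum mulr0.
Qed.

Lemma eps_neq0 : (0 < N)%N -> eps N != 0 :> R.
Proof. by rewrite /eps invr_eq0 pnatr_eq0 -lt0n. Qed.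

Lemma sum_Dd (d : int -> R) (r : int) (n : nat) :
  \sum_(m < n) Dd N d (r + m%:Z) = (d (r + n%:Z) - d r) / eps N.
Proof.
elim: n => [|n IH]; first by rewrite big_ord0 addr0 subrr mul0r.
by rewrite big_ord_recr /= IH /Dd -[n.+1]addn1 PoszD addrA; ring.
Qed.

Variable (irep : nat -> int) (k : nat).

Lemma innerRep_const_Dd_periodic (F s : int -> R) (c : R) :
  (forall m, (m < p)%N -> F (irep k + m%:Z) = c) -> periodic p s ->
  innerRep p irep k F (Dd N s) = 0.
Proof.
move=> F_const s_per; rewrite /innerRep.
rewrite (eq_bigr (fun m : 'I_p => c * Dd N s (irep k + m%:Z))) => [|m _].
  by rewrite -mulr_sumr sum_Dd s_per subrr mul0r mulr0 mulr0.
by rewrite F_const.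
Qed.

Lemma innerRep_weighted_sqr_eq0 (q a : int -> R) :
  (forall m, (m < p)%N -> 0 < q (irep k + m%:Z)) ->
  innerRep p irep k (fun j => q j * a j) a = 0 ->
  forall m, (m < p)%N -> a (irep k + m%:Z) = 0.
Proof.
move=> q_pos; rewrite /innerRep => /eqP.
rewrite mulf_eq0 invr_eq0 pnatr_eq0 eqn0Ngt p_gt0 /= => /eqP energy0 m lt_mp.
have term_ge0 (i : 'I_p) : true -> 0 <= q (irep k + i%:Z) * a (irep k + i%:Z) * a (irep k + i%:Z).
  by move=> _; rewrite -mulrA -expr2 mulr_ge0 ?sqr_ge0 // ltW // q_pos.
have /eqP := @psumr_eq0P _ _ _ _ term_ge0 energy0 (Ordinal lt_mp) isT.
by rewrite -mulrA mulf_eq0 (gt_eqF (q_pos m lt_mp)) /= mulf_eq0 orbb => /eqP.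
Qed.

End PeriodicGridFunctions.

Definition ellk_slope {R : realFieldType} (ik : nat -> int) (k : nat) (v : int -> R) : R :=
  (v (ik k.+1) - v (ik k)) / (ik k.+1 - ik k)%:~R.

Lemma ellk_step (R : realFieldType) (ik : nat -> int) (k : nat) (v : int -> R) (j : int) :
  ellk ik k v (j + 1) - ellk ik k v j = ellk_slope ik k v.
Proof. by rewrite /ellk /ellk_slope -[j + 1 - _]addrAC intrD; ring. Qed.

Lemma Dd_affine_on (R : realFieldType) (N : nat) (ik : nat -> int) (k : nat)
    (v : int -> R) (i : int) :
  affine_on (ik k) (ik k.+1) v -> inS ik k i ->
  Dd N v i = ellk_slope ik k v / eps N.
Proof.
move=> v_aff /andP [le_ki lt_ik1].
have v_ellk j : ik k <= j <= ik k.+1 -> v j = ellk ik k v j by move/v_aff.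
rewrite /Dd -(ellk_step ik k v i) (v_ellk i) ?le_ki ?ltW // (v_ellk (i + 1)) //.
by rewrite (le_trans le_ki (lerDl _ 1)) -ltzD1 ltrD2r.
Qed.

Section Corrector.

Variables (R : realFieldType) (N p : nat) (psi : int -> int -> R).
Variables (ik irep icoll : nat -> int) (k : nat).
Hypothesis p_gt0 : (0 < p)%N.

Lemma is_corrector_unique (v w1 w2 : int -> R) :
  (0 < N)%N -> (forall j, 0 < psi (icoll k) j) ->
  is_corrector N p psi ik irep icoll k v w1 ->
  is_corrector N p psi ik irep icoll k v w2 ->
  forall j, w1 j = w2 j.
Proof.
move=> N_gt0 psi_pos [w1_sharp w1_orth] [w2_sharp w2_orth] j.
set d := fun x => w1 x - w2 x.
have d_sharp : Upsharp p d by exact: Upsharp_sub.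
have energy0 : innerRep p irep k (fun j => psicoll psi icoll k j * Dd N d j) (Dd N d) = 0.
  rewrite -[RHS](subrr 0) -{1}(w1_orth d d_sharp) -(w2_orth d d_sharp) /innerRep.
  rewrite -mulrBr -sumrB; congr (_ * _); apply: eq_bigr => m _.
  by rewrite /Dd /d; ring.
have Dd_d0 := innerRep_weighted_sqr_eq0 p_gt0 (fun m _ => psi_pos _) energy0.
suff /eqP : d j = 0 by rewrite subr_eq0 => /eqP.
apply: (Upsharp_step_eq0 (r := irep k) p_gt0 d_sharp) => m lt_mp.
have /eqP := Dd_d0 m lt_mp.
by rewrite /Dd mulf_eq0 invr_eq0 (negbTE (eps_neq0 _ N_gt0)) orbF subr_eq0 => /eqP.
Qed.

Lemma is_corrector_cell (chi : int -> int -> R) (v : int -> R) :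
  is_cell_solution N p psi chi ->
  is_corrector N p psi ik irep icoll k v (fun j => ellk_slope ik k v * chi (icoll k) j).
Proof.
move=> [chi_twoscale [chi_mean cell_eq]].
set g := ellk_slope ik k v; set a := icoll k.
have chi_sharp : Upsharp p (chi a).
  split; first by move=> j; case: (chi_twoscale a j).
  move/eqP: (chi_mean a).
  by rewrite mulf_eq0 invr_eq0 pnatr_eq0 eqn0Ngt p_gt0 /= => /eqP.
split; first exact: Upsharp_scale.
move=> s [s_per _].
pose flux j := psi a j * (1 + DY chi a j).
have flux_step j : flux (j + 1) = flux j.
  by have := cell_eq a j; rewrite /flux /DY; lra.
have flux_window m : flux (irep k + m%:Z) = flux (irep k).
  elim: m => [|m IH]; first by rewrite addr0.
  by rewrite -[m.+1]addn1 PoszD addrA flux_step.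
have flux_Dd j : psi a j * Dd N (fun x => ellk ik k v x + g * chi a x) j = g / eps N * flux j.
  have := ellk_step ik k v j; rewrite -/g => ell_step.
  by rewrite /Dd /flux /DY -[ellk ik k v (j + 1)](subrK (ellk ik k v j)) ell_step; ring.
apply: (innerRep_const_Dd_periodic N (c := g / eps N * flux (irep k))) s_per => m _.
by rewrite /psicoll -/a flux_Dd flux_window.
Qed.

End Corrector.

Theorem lemma6p5 (R : realFieldType) (N p K : nat)
  (psi chi : int -> int -> R) (c_psi C_psi C'_psi : R)
  (f uH : int -> R) (ik irep icoll : nat -> int) (w : nat -> int -> R) :
  (0 < N)%N -> (0 < p)%N ->
  twoscale N p psi ->
  (0 < c_psi) ->
  (forall i j, c_psi <= psi i j <= C_psi) ->
  Linf_le N p (DX N psi) C'_psi ->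
  is_cell_solution N p psi chi ->
  UNper N f -> meanX N f = 0 ->
  mesh N K ik -> sampling p K ik irep icoll ->
  is_HQC_solution N p K psi ik irep icoll f uH ->
  (forall k, (k < K)%N -> is_corrector N p psi ik irep icoll k uH (w k)) ->
  forall k, (k < K)%N -> forall i : int, inS ik k i ->
    recon uH w k i = uH i + eps N * chi (icoll k) i * Dd N uH i.
Proof.
move=> N_gt0 p_gt0 _ c_psi_gt0 psi_bounds _ chi_cell _ _ _ _
  [[[_ uH_affine] _] _] w_corr k lt_kK i i_Sk.
have psi_pos j : 0 < psi (icoll k) j.
  by case/andP: (psi_bounds (icoll k) j) => c_le _; apply: lt_le_trans c_le.
rewrite /recon (is_corrector_unique p_gt0 N_gt0 psi_pos (w_corr k lt_kK)
  (is_corrector_cell _ _ _ _ p_gt0 uH chi_cell)).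
rewrite (Dd_affine_on N (uH_affine k lt_kK) i_Sk).
by field; exact: eps_neq0.
Qed.
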